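(* Let $(\Omega,\mathcal{F})$ be a measurable space, $\mathcal{P}$ a nonempty set of probability measures on $(\Omega,\mathcal{F})$, and $\hat{\mathbb{E}}[Z]=\sup_{P\in\mathcal{P}}E_P[Z]$. Let $X,Y$ be random variables with $\hat{\mathbb{E}}[X^2]+\hat{\mathbb{E}}[Y^2]<\infty$. Then (1) $\overline{C}(X,Y)=\sup_{P\in\mathrm{co}(\mathcal{P})}C_P(X,Y)$; (2) $\underline{C}(X,Y)=\inf_{P\in\mathrm{co}(\mathcal{P})}C_P(X,Y)$.
   Context: $\mathrm{co}(\mathcal{P})$ denotes the convex hull of $\mathcal{P}$ (finite convex combinations of elements of $\mathcal{P}$). For a random variable $Z$ with $\hat{\mathbb{E}}[Z^2]<\infty$: upper mean $\overline{\mu}_Z=\hat{\mathbb{E}}[Z]$, lower mean $\underline{\mu}_Z=-\hat{\mathbb{E}}[-Z]$, and $M_Z=[\underline{\mu}_Z,\overline{\mu}_Z]$. The upper covariance is $\overline{C}(X,Y)=\max_{\mu_2\in M_Y}\min_{\mu_1\in M_X}\hat{\mathbb{E}}[(X-\mu_1)(Y-\mu_2)]$ and the lower covariance is $\underline{C}(X,Y)=\min_{\mu_2\in M_Y}\max_{\mu_1\in M_X}\left(-\hat{\mathbb{E}}[-(X-\mu_1)(Y-\mu_2)]\right)$. For a probability measure $P$, $C_P(X,Y)=E_P[(X-E_P[X])(Y-E_P[Y])]$. *)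

From HB Require Import structures.
From mathcomp Require Import all_boot all_order all_algebra.
From mathcomp Require Import all_classical all_reals all_analysis.
Set Implicit Arguments. Unset Strict Implicit. Unset Printing Implicit Defensive.
Import Order.TTheory GRing.Theory Num.Theory.
Local Open Scope classical_set_scope.
Local Open Scope ring_scope.
Local Open Scope ereal_scope.

Section sublinear.
Context {d : measure_display} {T : measurableType d} {R : realType}.

Definition uexp (Pset : set (probability T R)) (Z : T -> R) : \bar R :=
  ereal_sup [set 'E_P[Z] | P in Pset].

Definition lexp (Pset : set (probability T R)) (Z : T -> R) : \bar R :=
  - uexp Pset (fun w => - Z w)%R.

Definition Mint (Pset : set (probability T R)) (Z : T -> R) : set R :=
  [set m : R | lexp Pset Z <= m%:E /\ m%:E <= uexp Pset Z].

Definition upper_cov (Pset : set (probability T R)) (X Y : T -> R) : \bar R :=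
  ereal_sup [set ereal_inf
     [set uexp Pset (fun w => (X w - m1) * (Y w - m2))%R | m1 in Mint Pset X]
   | m2 in Mint Pset Y].

Definition lower_cov (Pset : set (probability T R)) (X Y : T -> R) : \bar R :=
  ereal_inf [set ereal_sup
     [set - uexp Pset (fun w => - ((X w - m1) * (Y w - m2)))%R | m1 in Mint Pset X]
   | m2 in Mint Pset Y].

Definition conv_hull (Pset : set (probability T R)) : set (probability T R) :=
  [set Q | exists (n : nat) (w : 'I_n -> R) (Ps : 'I_n -> probability T R),
     [/\ (forall i, 0 <= w i)%R, (\sum_(i < n) w i = 1)%R,
         (forall i, Pset (Ps i)) &
         (forall A, measurable A -> Q A = \sum_(i < n) (w i)%:E * Ps i A)]].

End sublinear.

(* For a probability P write a = E_P[X], b = E_P[Y], c = E_P[XY]; then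
   E_P[(X - m1)(Y - m2)] = c - m1 b - m2 a + m1 m2, C_P(X, Y) = c - a b, and the
   triple (a, b, c) is affine along mixtures.  For Q in co(Pset), every linear
   functional of Q's triple is dominated by its value at some P in Pset, so the
   choice m2 = E_Q[Y] shows that the max-min is at least C_Q(X, Y).  Conversely,
   given m2 and a level v above every C_Q, a slope m1 in M_X with
   c - m1 b - m2 a + m1 m2 <= v on Pset is the supremum of the ratios
   (c - m2 a - v) / (b - m2) over the P with b > m2; they lie below the ratios of
   the P' with b' < m2 because the mixture of P and P' with Y-mean m2 has
   covariance at most v.  The lower covariance is minus the upper covariance of
   (-X, Y). *)

From HB Require Import structures.
From mathcomp Require Import all_boot all_order all_algebra.
From mathcomp Require Import all_classical all_reals all_analysis.
From mathcomp Require Import ring lra measurable_realfun.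
Set Implicit Arguments. Unset Strict Implicit. Unset Printing Implicit Defensive.
Import Order.TTheory GRing.Theory Num.Theory.
Local Open Scope classical_set_scope.
Local Open Scope ring_scope.

Section separating_slope.
Context {R : realType} {I : Type}.
Variables (S : set I) (a k beta : I -> R) (lo hi : R).
Hypothesis lo_le_hi : lo <= hi.
Hypothesis a_bounds : forall s, S s -> lo <= a s <= hi.
Hypothesis k_le : forall s, S s -> k s <= a s * beta s.
Hypothesis k_cross : forall s1 s2, S s1 -> S s2 -> 0 < beta s1 -> beta s2 < 0 ->
  beta s1 * k s2 <= beta s2 * k s1.

(* The slope is the largest of [lo] and the ratios [k s / beta s] with [beta s > 0]. *)
Lemma exists_separating_slope :
  exists2 t, lo <= t <= hi & forall s, S s -> k s <= t * beta s.
Proof.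
pose E := [set r | r = lo \/ exists2 s, S s /\ 0 < beta s & r = k s / beta s].
have E_lo : E lo by left.
have E_hi : ubound E hi.
  move=> _ [->//|[s [Ss bs] ->]]; rewrite ler_pdivrMr //.
  have /andP[_ ahi] := a_bounds Ss.
  exact: le_trans (k_le Ss) (ler_wpM2r (ltW bs) ahi).
have E_ub : has_ubound E by exists hi.
have sup_le_ratio s : S s -> beta s < 0 -> sup E <= k s / beta s.
  move=> Ss bs; apply: ge_sup; first by exists lo.
  move=> _ [->|[s' [Ss' bs'] ->]].
    rewrite ler_ndivlMr //; have /andP[loa _] := a_bounds Ss.
    exact: le_trans (k_le Ss) (ler_wnM2r (ltW bs) loa).
  by rewrite ler_pdivrMr // mulrAC ler_ndivlMr // mulrC [k s' * _]mulrC k_cross.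
exists (sup E).
  by rewrite ub_le_sup //= ge_sup //; exists lo.
move=> s Ss; case: (ltgtP (beta s) 0) => bs.
- by rewrite -ler_ndivlMr //; exact: sup_le_ratio.
- by rewrite -ler_pdivrMr //; apply: ub_le_sup E_ub _ _; right; exists s.
- by have := k_le Ss; rewrite bs !mulr0.
Qed.

End separating_slope.

Definition range_hull {R : realType} {I : Type} (S : set I) (f : I -> R) : set R :=
  [set m | (ereal_inf [set (f s)%:E | s in S] <= m%:E
            /\ m%:E <= ereal_sup [set (f s)%:E | s in S])%E].

(* [a], [b], [c] stand for E[X], E[Y], E[XY] under the measures indexed by [I];
   [H] plays the role of the convex hull of [S]. *)
Section bilinear_maxmin.
Context {R : realType} {I : Type}.
Variables (S H : set I) (a b c : I -> R).
Hypothesis S_neq0 : S !=set0.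
Hypothesis a_bounded : exists K, forall s, S s -> `|a s| <= K.
Hypothesis H_dominated : forall h, H h -> forall al be ga : R,
  exists2 s, S s & al * a h + be * b h + ga * c h <= al * a s + be * b s + ga * c s.
Hypothesis H_mixtures : forall s1 s2, S s1 -> S s2 -> forall l, 0 <= l -> l <= 1 ->
  exists2 h, H h & [/\ a h = l * a s1 + (1 - l) * a s2,
                      b h = l * b s1 + (1 - l) * b s2 &
                      c h = l * c s1 + (1 - l) * c s2].

Let lo := inf (a @` S).
Let hi := sup (a @` S).

Let aS_bounded : has_lbound (a @` S) /\ has_ubound (a @` S).
Proof.
have [K aK] := a_bounded.
by split; [exists (- K) | exists K] => _ [s Ss <-];
  have := aK s Ss; rewrite ler_norml => /andP[].
Qed.

Let a_bounds s : S s -> lo <= a s <= hi.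
Proof.
have [aS_lb aS_ub] := aS_bounded.
by move=> Ss; rewrite ge_inf ?ub_le_sup //; exists s.
Qed.

Let lo_le_hi : lo <= hi.
Proof. by have [s /a_bounds /andP[loa ahi]] := S_neq0; exact: le_trans loa ahi. Qed.

Let range_hull_a t : lo <= t <= hi -> range_hull S a t.
Proof.
have [aS_lb aS_ub] := aS_bounded.
have aS_neq0 : a @` S !=set0 by have [s Ss] := S_neq0; exists (a s), s.
rewrite /range_hull.
have -> : [set (a s)%:E | s in S] = EFin @` (a @` S) by rewrite image_comp.
by rewrite ereal_inf_EFin ?ereal_sup_EFin //= !lee_fin => /andP[].
Qed.

Section below_value.
Variable v : R.
Hypothesis H_le_v : forall h, H h -> c h - a h * b h <= v.

Let S_le_v s : S s -> c s - a s * b s <= v.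
Proof.
move=> Ss; have [h Hh [ah bh ch]] := H_mixtures Ss Ss ler01 (lexx 1).
by have := H_le_v Hh; rewrite ah bh ch subrr !mul0r !addr0 !mul1r.
Qed.

(* Mix [s1] and [s2] with the weight that makes [b] equal to [m2]. *)
Let ratio_cross_le m2 s1 s2 : S s1 -> S s2 -> 0 < b s1 - m2 -> b s2 - m2 < 0 ->
  (b s1 - m2) * (c s2 - m2 * a s2 - v) <= (b s2 - m2) * (c s1 - m2 * a s1 - v).
Proof.
move=> Ss1 Ss2 b1 b2; pose l := (m2 - b s2) / (b s1 - b s2).
have b12 : 0 < b s1 - b s2 by lra.
have l_ge0 : 0 <= l by rewrite divr_ge0 //; lra.
have l_le1 : l <= 1 by rewrite ler_pdivrMr //; lra.
have lE : l * (b s1 - b s2) = m2 - b s2 by rewrite divfK // gt_eqF.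
have [h Hh [ah bh ch]] := H_mixtures Ss1 Ss2 l_ge0 l_le1.
have := H_le_v Hh; rewrite ah bh ch.
have -> : l * b s1 + (1 - l) * b s2 = m2 by lra.
move=> mix_le_v.
have mix_le : l * (c s1 - m2 * a s1 - v) + (1 - l) * (c s2 - m2 * a s2 - v) <= 0.
  by lra.
have := mulr_le0_ge0 mix_le (ltW b12).
have -> : forall k1 k2, (l * k1 + (1 - l) * k2) * (b s1 - b s2) =
    l * (b s1 - b s2) * k1 + (b s1 - b s2 - l * (b s1 - b s2)) * k2.
  by move=> *; ring.
by rewrite lE; lra.
Qed.

Lemma exists_slope_le m2 : exists2 t, range_hull S a t &
  forall s, S s -> c s - t * b s - m2 * a s + t * m2 <= v.
Proof.
have k_le s : S s -> c s - m2 * a s - v <= a s * (b s - m2).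
  by move=> /S_le_v; lra.
have [t /range_hull_a t_in t_sep] :=
  exists_separating_slope lo_le_hi a_bounds k_le (@ratio_cross_le m2).
by exists t => // s /t_sep; lra.
Qed.

End below_value.

Local Open Scope ereal_scope.

Let maxmin := ereal_sup [set ereal_inf [set
    ereal_sup [set (c s - m1 * b s - m2 * a s + m1 * m2)%:E | s in S]
  | m1 in range_hull S a] | m2 in range_hull S b].

Let maxmin_le : maxmin <= ereal_sup [set (c h - a h * b h)%:E | h in H].
Proof.
set V := ereal_sup _.
have V_ge h : H h -> (c h - a h * b h)%:E <= V.
  by move=> Hh; apply: ereal_sup_ubound; exists h.
have [s0 Ss0] := S_neq0.
have [h0 Hh0 _] := H_mixtures Ss0 Ss0 ler01 (lexx 1%R).
case: V V_ge => [v||] V_ge; last 2 first.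
- by rewrite leey.
- by have := V_ge _ Hh0; rewrite leeNy_eq.
have H_le_v h : H h -> (c h - a h * b h <= v)%R by move=> /V_ge; rewrite lee_fin.
apply: ge_ereal_sup => _ [m2 _ <-].
have [t t_in t_le] := exists_slope_le H_le_v m2.
apply: ge_ereal_inf; exists (ereal_sup
  [set (c s - t * b s - m2 * a s + t * m2)%:E | s in S]); first by exists t.
by apply: ge_ereal_sup => _ [s Ss <-]; rewrite lee_fin; exact: t_le.
Qed.

Let le_maxmin : ereal_sup [set (c h - a h * b h)%:E | h in H] <= maxmin.
Proof.
apply: ge_ereal_sup => _ [h Hh <-]; apply: le_ereal_sup_tmp.
exists (ereal_inf [set ereal_sup
    [set (c s - m1 * b s - b h * a s + m1 * b h)%:E | s in S] | m1 in range_hull S a]).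
  exists (b h) => //; split.
    have [s Ss hs] := H_dominated Hh 0 (-1) 0.
    by apply: ge_ereal_inf; exists (b s)%:E; [exists s|rewrite lee_fin; lra].
  have [s Ss hs] := H_dominated Hh 0 1 0.
  by apply: le_ereal_sup_tmp; exists (b s)%:E; [exists s|rewrite lee_fin; lra].
apply: le_ereal_inf_tmp => _ [m1 _ <-].
have [s Ss hs] := H_dominated Hh (- b h) (- m1) 1.
by apply: le_ereal_sup_tmp; exists (c s - m1 * b s - b h * a s + m1 * b h)%:E;
  [exists s|rewrite lee_fin; lra].
Qed.

Lemma maxmin_eq_sup : maxmin = ereal_sup [set (c h - a h * b h)%:E | h in H].
Proof. by apply/eqP; rewrite eq_le maxmin_le le_maxmin. Qed.

End bilinear_maxmin.

Lemma exists_ge_convex_sum {R : realType} n (w phi : 'I_n -> R) :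
  (forall i, 0 <= w i) -> \sum_(i < n) w i = 1 ->
  exists i, \sum_(j < n) w j * phi j <= phi i.
Proof.
case: n w phi => [|n] w phi w_ge0 w_sum1.
  by move: w_sum1; rewrite big_ord0 => /eqP; rewrite eq_sym oner_eq0.
have [i _ phi_le] := @arg_maxP _ _ _ (@ord0 n) predT phi erefl.
exists i; apply: (le_trans (y := \sum_(j < n.+1) w j * phi i)).
  by apply: ler_sum => j _; apply: ler_wpM2l => //; exact: phi_le.
by rewrite -mulr_suml w_sum1 mul1r.
Qed.

Lemma dominator_bounds {R : realType} (x y : R) :
  [/\ `|x| <= 1 + x ^+ 2 + y ^+ 2, `|y| <= 1 + x ^+ 2 + y ^+ 2
    & `|x * y| <= 1 + x ^+ 2 + y ^+ 2].
Proof.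
rewrite normrM -[x ^+ 2]real_normK ?num_real // -[y ^+ 2]real_normK ?num_real //.
by have := normr_ge0 x; have := normr_ge0 y; split; nra.
Qed.

Section probability_mixture.
Context {d : measure_display} {T : measurableType d} {R : realType}.
Variables (P1 P2 : probability T R) (l : R) (l_ge0 : 0 <= l) (l_le1 : l <= 1).

Let l_compl_ge0 : 0 <= 1 - l. Proof. by rewrite subr_ge0. Qed.

Definition pmix :=
  measure_add (mscale (NngNum l_ge0) P1) (mscale (NngNum l_compl_ge0) P2).

HB.instance Definition _ := Measure.on pmix.

Let pmix_setT : pmix setT = 1%E.
Proof.
by rewrite /pmix measure_addE /= /mscale /= !probability_setT !mule1 -EFinD addrC subrK.
Qed.

HB.instance Definition _ := Measure_isProbability.Build _ _ _ pmix pmix_setT.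

Lemma pmixE A : pmix A = (l%:E * P1 A + (1 - l)%:E * P2 A)%E.
Proof. by rewrite /pmix measure_addE. Qed.

End probability_mixture.

Definition mean {d : measure_display} {T : measurableType d} {R : realType}
  (P : probability T R) (Z : T -> R) : R := fine 'E_P[Z].

Section convex_combination.
Context {d : measure_display} {T : measurableType d} {R : realType}.
Variables (Q : probability T R) (n : nat) (w : 'I_n -> R) (Ps : 'I_n -> probability T R).
Hypothesis w_ge0 : forall i, 0 <= w i.
Hypothesis Q_conv : forall A, measurable A -> Q A = (\sum_(i < n) (w i)%:E * Ps i A)%E.
Local Open Scope ereal_scope.

Lemma ge0_integral_conv (f : T -> \bar R) :
  measurable_fun setT f -> (forall x, 0 <= f x) ->
  \int[Q]_x f x = \sum_(i < n) (w i)%:E * \int[Ps i]_x f x.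
Proof.
move=> mf f_ge0.
pose m_ : {measure set T -> \bar R}^nat := fun k =>
  if @insub nat (fun k => k < n)%N 'I_n k is Some i
  then mscale (NngNum (w_ge0 i)) (Ps i) else mzero.
have m_E (i : 'I_n) : m_ i = mscale (NngNum (w_ge0 i)) (Ps i).
  by rewrite /m_; case: insubP => [j _ /val_inj -> //|]; rewrite ltn_ord.
rewrite (eq_measure_integral (msum m_ n)) => [|A mA _]; last first.
  by apply: (etrans (Q_conv mA)); apply: eq_bigr => i _; rewrite m_E.
rewrite ge0_integral_measure_sum //; apply: eq_bigr => i _.
by rewrite m_E ge0_integral_mscale.
Qed.

Lemma Lfun1_conv (f : T -> R) : measurable_fun setT f ->
  (forall i, f \in Lfun (Ps i) 1) -> f \in Lfun Q 1.
Proof.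
move=> mf fL; apply/Lfun1_integrable/integrableP.
split; first exact/measurable_EFinP.
rewrite (ge0_integral_conv (f := fun x => `|(f x)%:E|)) //; last first.
  exact/measurableT_comp/measurable_EFinP.
apply: lte_sum_pinfty => i _; apply: lte_mul_pinfty => //; first by rewrite lee_fin.
by have /Lfun1_integrable/integrableP[] := fL i.
Qed.

Lemma mean_conv (f : T -> R) : measurable_fun setT f ->
  (forall i, f \in Lfun (Ps i) 1) -> mean Q f = (\sum_(i < n) w i * mean (Ps i) f)%R.
Proof.
move=> mf fL; have mF : measurable_fun setT (EFin \o f) by exact/measurable_EFinP.
have fint i : (Ps i).-integrable setT (EFin \o f) by exact/Lfun1_integrable.
pose p i := fine (\int[Ps i]_x (EFin \o f)^\+ x).
pose q i := fine (\int[Ps i]_x (EFin \o f)^\- x).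
have pE i : \int[Ps i]_x (EFin \o f)^\+ x = (p i)%:E.
  by rewrite fineK // (integrable_pos_fin_num measurableT (fint i)).
have qE i : \int[Ps i]_x (EFin \o f)^\- x = (q i)%:E.
  by rewrite fineK // (integrable_neg_fin_num measurableT (fint i)).
rewrite /mean unlock integralE.
rewrite (ge0_integral_conv (measurable_funepos mF) (@funepos_ge0 _ _ _)).
rewrite (ge0_integral_conv (measurable_funeneg mF) (@funeneg_ge0 _ _ _)).
under eq_bigr do rewrite pE -EFinM.
under [X in _ - X]eq_bigr do rewrite qE -EFinM.
rewrite !sumEFin -EFinB -sumrB /=; apply: eq_bigr => i _.
by rewrite integralE pE qE -EFinB /= mulrBr.
Qed.

End convex_combination.

Section means.
Context {d : measure_display} {T : measurableType d} {R : realType}.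
Variable P : probability T R.
Local Open Scope ereal_scope.

Lemma meanE (Z : T -> R) : Z \in Lfun P 1 -> 'E_P[Z] = (mean P Z)%:E.
Proof. by move=> ZL; rewrite fineK // expectation_fin_num. Qed.

Lemma meanN (Z : T -> R) : Z \in Lfun P 1 -> mean P (\- Z)%R = (- mean P Z)%R.
Proof.
move=> ZL; have -> : (\- Z = -1 \o* Z)%R by apply/funext => x /=; rewrite mulrN1.
by rewrite /mean expectationZl // meanE // -EFinM mulN1r.
Qed.

Lemma expectation_shifted_prod (U V : T -> R) (m1 m2 : R) :
  U \in Lfun P 1 -> V \in Lfun P 1 -> (U * V)%R \in Lfun P 1 ->
  'E_P[fun w => (U w - m1) * (V w - m2)]%R =
    (mean P (U * V)%R - m1 * mean P V - m2 * mean P U + m1 * m2)%:E.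
Proof.
move=> UL VL UVL.
have -> : (fun w => (U w - m1) * (V w - m2))%R =
    ((fun w => U w * V w) \+ (- m1) \o* V \+ ((- m2) \o* U \+ cst (m1 * m2)))%R.
  by apply/funext => w /=; ring.
have mVL : ((- m1) \o* V)%R \in Lfun P 1 by exact: Lfun_scale.
have mUL : ((- m2) \o* U)%R \in Lfun P 1 by exact: Lfun_scale.
have cL : (cst (m1 * m2))%R \in Lfun P 1 by exact: Lfun_cst.
rewrite !expectationD ?rpredD // expectation_cst !expectationZl // !meanE //.
by rewrite -!EFinM -!EFinD; congr (_%:E); ring.
Qed.

Lemma covariance_mean (U V : T -> R) :
  U \in Lfun P 1 -> V \in Lfun P 1 -> (U * V)%R \in Lfun P 1 ->
  covariance P U V = (mean P (U * V)%R - mean P U * mean P V)%:E.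
Proof. by move=> UL VL UVL; rewrite covarianceE // !meanE // -EFinM -EFinB. Qed.

Lemma Lfun1_dominated (f g : T -> R) :
  measurable_fun setT f -> measurable_fun setT g ->
  (forall x, `|f x| <= g x)%R -> 'E_P[g] < +oo -> f \in Lfun P 1.
Proof.
move=> mf mg fg Eg; apply/Lfun1_integrable/integrableP.
split; first exact/measurable_EFinP.
apply: le_lt_trans Eg; rewrite unlock; apply: ge0_le_integral => //.
- exact/measurableT_comp/measurable_EFinP.
- exact/measurable_EFinP.
- by move=> x _ /=; rewrite lee_fin.
Qed.

Lemma abse_expectation_le (f g : T -> R) :
  measurable_fun setT f -> measurable_fun setT g ->
  (forall x, `|f x| <= g x)%R -> `|'E_P[f]| <= 'E_P[g].
Proof.
move=> mf mg fg; rewrite unlock.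
apply: le_trans (le_abse_integral _ _ _) _ => //; first exact/measurable_EFinP.
apply: ge0_le_integral => //.
- exact/measurableT_comp/measurable_EFinP.
- exact/measurable_EFinP.
- by move=> x _ /=; rewrite lee_fin.
Qed.

End means.

Section upper_expectation.
Context {d : measure_display} {T : measurableType d} {R : realType}.
Variable Pset : set (probability T R).
Local Open Scope ereal_scope.

Lemma uexp_mean (Z : T -> R) : (forall P, Pset P -> Z \in Lfun P 1) ->
  uexp Pset Z = ereal_sup [set (mean P Z)%:E | P in Pset].
Proof. by move=> ZL; congr ereal_sup; apply: eq_imagel => P /ZL /meanE. Qed.

Lemma lexp_mean (Z : T -> R) : (forall P, Pset P -> Z \in Lfun P 1) ->
  lexp Pset Z = ereal_inf [set (mean P Z)%:E | P in Pset].
Proof.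
move=> ZL; rewrite /lexp ereal_infEN image_comp; congr (- ereal_sup _).
apply: eq_imagel => P /ZL ZPL /=.
by rewrite (meanE (Z := \- Z)%R) ?rpredN // meanN.
Qed.

Lemma Mint_range_hull (Z : T -> R) : (forall P, Pset P -> Z \in Lfun P 1) ->
  Mint Pset Z = range_hull Pset (mean ^~ Z).
Proof. by move=> ZL; rewrite /Mint lexp_mean // uexp_mean. Qed.

Lemma MintN (Z : T -> R) : Mint Pset (\- Z)%R = -%R @` Mint Pset Z.
Proof.
rewrite /Mint.
have -> : lexp Pset (\- Z)%R = - uexp Pset Z.
  by rewrite /lexp; congr (- uexp _ _); apply/funext => w /=; rewrite opprK.
have -> : uexp Pset (\- Z)%R = - lexp Pset Z by rewrite /lexp oppeK.
rewrite eqEsubset; split => [m [Zm mZ]|_ [m [Zm mZ] <-]].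
  exists (- m)%R; last by rewrite opprK.
  by split; rewrite /= EFinN; [rewrite leeNr|rewrite leeNl].
by split; rewrite EFinN leeN2.
Qed.

Lemma lower_covE (X Y : T -> R) : lower_cov Pset X Y = - upper_cov Pset (\- X)%R Y.
Proof.
rewrite /lower_cov /upper_cov -ereal_infN image_comp; congr ereal_inf.
apply: eq_imagel => m2 _ /=; rewrite -ereal_supN MintN !image_comp; congr ereal_sup.
by apply: eq_imagel => m1 _ /=; congr (- uexp _ _); apply/funext => w /=; ring.
Qed.

End upper_expectation.

Section second_moments.
Context {d : measure_display} {T : measurableType d} {R : realType}.
Variables (Pset : set (probability T R)) (X Y : T -> R).
Hypotheses (mX : measurable_fun setT X) (mY : measurable_fun setT Y).
Local Open Scope ereal_scope.
Hypothesis sqr_fin :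
  uexp Pset (fun w => X w ^+ 2)%R + uexp Pset (fun w => Y w ^+ 2)%R < +oo.

Let dom := (cst 1 \+ (fun w => X w ^+ 2) \+ (fun w => Y w ^+ 2))%R.
Let dom_ub := 1 + (uexp Pset (fun w => X w ^+ 2)%R + uexp Pset (fun w => Y w ^+ 2)%R).

Let mdom : measurable_fun setT dom.
Proof.
by apply: measurable_funD; [apply: measurable_funD|]; try exact: measurable_funX.
Qed.

Let expectation_dom_le P : Pset P -> 'E_P[dom] <= dom_ub.
Proof.
move=> PP.
have E_le (Z : T -> R) : 'E_P[fun w => Z w ^+ 2]%R <= uexp Pset (fun w => Z w ^+ 2)%R.
  by apply: ereal_sup_ubound; exists P.
have E_ge0 (Z : T -> R) : 0 <= 'E_P[fun w => Z w ^+ 2]%R.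
  by apply: expectation_ge0 => w; exact: sqr_ge0.
have sqr_L (Z : T -> R) : measurable_fun setT Z ->
    uexp Pset (fun w => Z w ^+ 2)%R < +oo -> (fun w => Z w ^+ 2)%R \in Lfun P 1.
  move=> mZ Zfin; have mZ2 := measurable_funX 2 mZ.
  apply: (Lfun1_dominated mZ2 mZ2 _ (le_lt_trans (E_le Z) Zfin)) => w.
  by rewrite ger0_norm // sqr_ge0.
have uX_fin : uexp Pset (fun w => X w ^+ 2)%R < +oo.
  by apply: le_lt_trans sqr_fin; rewrite leeDl // (le_trans (E_ge0 Y) (E_le Y)).
have uY_fin : uexp Pset (fun w => Y w ^+ 2)%R < +oo.
  by apply: le_lt_trans sqr_fin; rewrite leeDr // (le_trans (E_ge0 X) (E_le X)).
rewrite !expectationD ?rpredD ?Lfun_cst ?sqr_L // expectation_cst /dom_ub addeA.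
by rewrite !leeD ?E_le.
Qed.

Let dom_ub_fin : dom_ub < +oo.
Proof. by rewrite /dom_ub lte_add_pinfty ?ltry. Qed.

Lemma Pset_cov_integrable P : Pset P ->
  [/\ X \in Lfun P 1, Y \in Lfun P 1 & (X * Y)%R \in Lfun P 1].
Proof.
move=> /expectation_dom_le/le_lt_trans/(_ dom_ub_fin) dom_fin.
split; apply: (Lfun1_dominated _ mdom _ dom_fin) => //; try exact: measurable_funM.
all: by move=> w; have [] := dominator_bounds (X w) (Y w).
Qed.

Lemma Pset_mean_bounded : exists K, forall P, Pset P -> (`|mean P X| <= K)%R.
Proof.
exists (fine dom_ub) => P PP; have [XL _ _] := Pset_cov_integrable PP.
have E_le : `|'E_P[X]| <= dom_ub.
  apply: (le_trans _ (expectation_dom_le PP)).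
  apply: (abse_expectation_le P mX mdom) => w.
  by have [] := dominator_bounds (X w) (Y w).
have dom_ub_fin_num : dom_ub \is a fin_num.
  by rewrite ge0_fin_numE // (le_trans _ E_le).
by rewrite -lee_fin fineK // -abse_EFin -meanE.
Qed.

Let conv_means (Q : probability T R) n (w : 'I_n -> R) Ps :
  (forall i, 0 <= w i)%R -> (forall i, Pset (Ps i)) ->
  (forall A, measurable A -> Q A = \sum_(i < n) (w i)%:E * Ps i A) ->
  [/\ mean Q X = (\sum_(i < n) w i * mean (Ps i) X)%R,
      mean Q Y = (\sum_(i < n) w i * mean (Ps i) Y)%R &
      mean Q (X * Y)%R = (\sum_(i < n) w i * mean (Ps i) (X * Y)%R)%R].
Proof.
move=> w_ge0 Ps_in Q_conv; have PsL i := Pset_cov_integrable (Ps_in i).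
have mXY := measurable_funM mX mY.
by split; apply: mean_conv => // i; have [] := PsL i.
Qed.

Lemma conv_hull_cov_integrable Q : conv_hull Pset Q ->
  [/\ X \in Lfun Q 1, Y \in Lfun Q 1 & (X * Y)%R \in Lfun Q 1].
Proof.
move=> [n [w [Ps [w_ge0 _ Ps_in Q_conv]]]].
have PsL i := Pset_cov_integrable (Ps_in i).
have mXY := measurable_funM mX mY.
by split; apply: (Lfun1_conv w_ge0 Q_conv) => // i; have [] := PsL i.
Qed.

Lemma conv_hull_dominated Q : conv_hull Pset Q -> forall al be ga : R,
  exists2 P, Pset P & (al * mean Q X + be * mean Q Y + ga * mean Q (X * Y)%R <=
                       al * mean P X + be * mean P Y + ga * mean P (X * Y)%R)%R.
Proof.
move=> [n [w [Ps [w_ge0 w_sum1 Ps_in Q_conv]]]] al be ga.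
have [-> -> ->] := conv_means w_ge0 Ps_in Q_conv.
pose phi i := (al * mean (Ps i) X + be * mean (Ps i) Y + ga * mean (Ps i) (X * Y)%R)%R.
have [i le_i] := exists_ge_convex_sum phi w_ge0 w_sum1.
exists (Ps i) => //; apply: le_trans le_i; rewrite !mulr_sumr -!big_split /=.
by apply: ler_sum => j _; rewrite /phi; lra.
Qed.

Lemma conv_hull_mixtures P1 P2 : Pset P1 -> Pset P2 ->
  forall l : R, (0 <= l)%R -> (l <= 1)%R ->
  exists2 Q, conv_hull Pset Q &
    [/\ mean Q X = (l * mean P1 X + (1 - l) * mean P2 X)%R,
        mean Q Y = (l * mean P1 Y + (1 - l) * mean P2 Y)%R &
        mean Q (X * Y)%R = (l * mean P1 (X * Y)%R + (1 - l) * mean P2 (X * Y)%R)%R].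
Proof.
move=> P1_in P2_in l l_ge0 l_le1.
pose w (i : 'I_2) := if val i == 0%N then l else (1 - l)%R.
pose Ps (i : 'I_2) := if val i == 0%N then P1 else P2.
have w_ge0 i : (0 <= w i)%R by rewrite /w; case: ifP; rewrite ?subr_ge0.
have Ps_in i : Pset (Ps i) by rewrite /Ps; case: ifP.
have w_sum1 : (\sum_(i < 2) w i = 1)%R.
  by rewrite !big_ord_recl big_ord0 /= addr0 addrC subrK.
have Q_conv A :
    measurable A -> pmix P1 P2 l_ge0 l_le1 A = \sum_(i < 2) (w i)%:E * Ps i A.
  by move=> _; rewrite pmixE !big_ord_recl big_ord0 /= adde0.
exists (pmix P1 P2 l_ge0 l_le1); first by exists 2%N, w, Ps.
have [-> -> ->] := conv_means w_ge0 Ps_in Q_conv.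
by rewrite !big_ord_recl !big_ord0 /= !addr0.
Qed.

Lemma upper_cov_conv_hull : Pset !=set0 ->
  upper_cov Pset X Y = ereal_sup [set covariance Q X Y | Q in conv_hull Pset].
Proof.
move=> Pset_neq0; have PL := Pset_cov_integrable.
have -> : [set covariance Q X Y | Q in conv_hull Pset] =
    [set (mean Q (X * Y)%R - mean Q X * mean Q Y)%:E | Q in conv_hull Pset].
  by apply: eq_imagel => Q /conv_hull_cov_integrable[]; exact: covariance_mean.
rewrite -(maxmin_eq_sup Pset_neq0 Pset_mean_bounded conv_hull_dominated
                        conv_hull_mixtures).
rewrite /upper_cov !Mint_range_hull => [|P /PL[]//|P /PL[]//].
congr ereal_sup; apply: eq_imagel => m2 _; congr ereal_inf; apply: eq_imagel => m1 _.
by congr ereal_sup; apply: eq_imagel => P /PL[]; exact: expectation_shifted_prod.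
Qed.

End second_moments.

Unset Implicit Arguments.
Local Open Scope ereal_scope.

Theorem theorem3p5 (d : measure_display) (T : measurableType d) (R : realType)
  (Pset : set (probability T R)) (X Y : T -> R) :
  Pset !=set0 ->
  measurable_fun setT X -> measurable_fun setT Y ->
  uexp Pset (fun w => X w ^+ 2)%R + uexp Pset (fun w => Y w ^+ 2)%R < +oo ->
  upper_cov Pset X Y = ereal_sup [set covariance Q X Y | Q in conv_hull Pset] /\
  lower_cov Pset X Y = ereal_inf [set covariance Q X Y | Q in conv_hull Pset].
Proof.
move=> Pset_neq0 mX mY sqr_fin; split; first exact: upper_cov_conv_hull.
have NX_sqr_fin :
    uexp Pset (fun w => (\- X)%R w ^+ 2)%R + uexp Pset (fun w => Y w ^+ 2)%R < +oo.
  by under eq_fun do rewrite sqrrN.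
rewrite lower_covE (upper_cov_conv_hull (measurable_funN mX) mY NX_sqr_fin Pset_neq0).
rewrite ereal_infEN image_comp; congr (- ereal_sup _); apply: eq_imagel => Q Q_in /=.
by have [XL YL XYL] := conv_hull_cov_integrable mX mY sqr_fin Q_in; rewrite covarianceNl.
Qed.
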